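(* Let an FCA with state set $S$, neighborhood $m=l+1+r$, local rule $f$ and boundary type $b\in\{\text{null},\text{periodic}\}$ be given, let $G$ be its reversibility graph and $\mathrm{CG}$ its circuit graph. Let $N$ be a negative vertex of $G$ with value $k\ge1$, let $C_1,\dots,C_t$ be distinct circuits of $G$ with lengths $r_1,\dots,r_t$, and let $x_1,\dots,x_t\ge 0$ be integers such that for every $j$ with $x_j>0$ there is a path in $\mathrm{CG}$ from $C_j$ to $N$ all of whose vertices other than $N$ are circuits $C_{j'}$ with $x_{j'}>0$. Then the FCA is not $(k+x_1r_1+\dots+x_tr_t)$-cell-reversible.
   Context: A one-dimensional finite cellular automaton (FCA) is given by a state set $S=\{0,1,\dots,s-1\}$, integers $l,r\ge 0$ with neighborhood size $m=l+1+r\ge 2$, a local rule $f:S^m\to S$, and a boundary type $b\in\{\text{null},\text{periodic}\}$. For $n\ge 1$ the global map $\tau_n:S^n\to S^n$ sends $(x_0,\dots,x_{n-1})$ to $(y_0,\dots,y_{n-1})$ with $y_i=f(x_{i-l},\dots,x_{i+r})$, where for the null boundary $x_j=0$ whenever $j<0$ or $j>n-1$, and for the periodic boundary indices are taken modulo $n$. The FCA is $n$-cell-reversible if $\tau_n$ is a bijection (equivalently, since $S^n$ is finite, surjective). Reversibility graph (RG). Null boundary: vertices are subsets of $S^{m-1}$; the root is $N_0=\{(a_1,\dots,a_{m-1})\in S^{m-1}: a_1=\dots=a_l=0\}$; the acceptance set is $R=\{(a_1,\dots,a_{m-1})\in S^{m-1}: a_{m-r}=\dots=a_{m-1}=0\}$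 (so $R=S^{m-1}$ if $r=0$); for a subset $N$ and $c\in S$, $\delta(N,c)=\{(a_1,\dots,a_{m-1})\in S^{m-1}:\exists a_0\in S,\ (a_0,\dots,a_{m-2})\in N,\ f(a_0,a_1,\dots,a_{m-1})=c\}$. Periodic boundary: vertices are subsets of $S^{m-1}\times S^{m-1}$; the root and the acceptance set are $N_0=R=\{(a,a):a\in S^{m-1}\}$; $\delta(N,c)=\{((a_1,\dots,a_{m-1}),(b_1,\dots,b_{m-1})):\exists b_0\in S,\ ((a_1,\dots,a_{m-1}),(b_0,\dots,b_{m-2}))\in N,\ f(b_0,\dots,b_{m-1})=c\}$. In both cases the RG is the directed graph whose vertex set consists of all subsets obtainable from $N_0$ by repeatedly applying $\delta$ (including $N_0$; equal subsets are the same vertex; the empty set may occur), with, for each vertex $N$ and each $c\in S$, an edge labelled $c$ from $N$ to $\delta(N,c)$. The value of a vertex $N$ is the length of a shortest directed path from $N_0$ to $N$. A vertex $N$ is negative if $N\cap R=\emptyset$. A circuit is an elementary directed cycle of the RG (a closed directed path with no repeated vertex other than its start = end; a loop is a circuit of length $1$); its length is its number of edges, and it passes through $N$ if $N$ is one of its vertices. Circuit graph (CG): the undirected graph whose vertices are all negative vertices and all circuits of the RG; two circuits are joined by an edge if they have at least one RG-vertex in common; a circuit $D$ and a negative vertex $N$ are joined by an edge if $D$ passes through $N$; there are no other edges. *)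

From HB Require Import structures.
From mathcomp Require Import all_boot all_order all_algebra.
Set Implicit Arguments. Unset Strict Implicit. Unset Printing Implicit Defensive.

Inductive boundary := NullB | PeriodicB.

(* A "reversibility-graph-like" automaton: vertices are subsets of a finite
   type X, with a root N0, an acceptance set R and a transition delta. *)
Record RGdata (S : Type) := RGData {
  rgX : finType;
  rgroot : {set rgX};
  rgacc : {set rgX};
  rgdelta : {set rgX} -> S -> {set rgX} }.

Section FCA.
(* State set S = {0,...,s1}, i.e. s = s1 + 1 states. *)
Variables (s1 l r : nat).
Local Notation S := 'I_s1.+1.
Local Notation st0 := (ord0 : S).
(* local rule f : S^m -> S with m = l + 1 + r, so m - 1 = l + r *)
Variable f : (l + r).+1.-tuple S -> S.

(* neighbourhood (x_{i-l}, ..., x_{i+r}) of cell i, null boundary: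
   pad x with l zeros on the left and r zeros on the right *)
Definition nbhd_null n (x : n.-tuple S) (i : nat) : (l + r).+1.-tuple S :=
  [tuple nth st0 (nseq l st0 ++ x ++ nseq r st0) (i + p) | p < (l + r).+1].

Definition nbhd_per n (x : n.-tuple S) (i : nat) : (l + r).+1.-tuple S :=
  [tuple nth st0 x (absz ((i%:Z + (p : nat)%:Z - l%:Z) %% n%:Z)%Z) | p < (l + r).+1].

Definition nbhd (b : boundary) n (x : n.-tuple S) (i : nat) :=
  match b with NullB => nbhd_null x i | PeriodicB => nbhd_per x i end.

Definition global_map (b : boundary) n (x : n.-tuple S) : n.-tuple S :=
  [tuple f (nbhd b x i) | i < n].

Definition reversible (b : boundary) (n : nat) : Prop := bijective (@global_map b n).

Definition RG_null : RGdata S := @RGData S ((l + r).-tuple S)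
  [set a : (l + r).-tuple S | [forall i : 'I_(l + r), (i < l) ==> (tnth a i == st0)]]
  [set a : (l + r).-tuple S | [forall i : 'I_(l + r), (l <= i) ==> (tnth a i == st0)]]
  (fun N c => [set a : (l + r).-tuple S |
     [exists a0 : S, [exists q in N, val q == belast a0 a] && (f (cons_tuple a0 a) == c)]]).

Definition RG_per : RGdata S := @RGData S ((l + r).-tuple S * (l + r).-tuple S)%type
  [set p : ((l + r).-tuple S * (l + r).-tuple S)%type | p.1 == p.2]
  [set p : ((l + r).-tuple S * (l + r).-tuple S)%type | p.1 == p.2]
  (fun N c => [set p : ((l + r).-tuple S * (l + r).-tuple S)%type |
     [exists b0 : S, [exists q in N, (q.1 == p.1) && (val q.2 == belast b0 p.2)]
                     && (f (cons_tuple b0 p.2) == c)]]).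

Definition RG (b : boundary) : RGdata S :=
  match b with NullB => RG_null | PeriodicB => RG_per end.

End FCA.

Section Graph.
Variables (S : finType) (G : RGdata S).
Local Notation V := {set rgX G}.

Definition run (w : seq S) : V := foldl (@rgdelta S G) (rgroot G) w.

Definition is_vertex (N : V) : Prop := exists w : seq S, run w = N.

Definition has_value (N : V) (k : nat) : Prop :=
  (exists w : seq S, size w = k /\ run w = N) /\
  (forall w : seq S, run w = N -> k <= size w).

Definition negative (N : V) : Prop := N :&: rgacc G = set0.

(* a circuit, given by its (vertex, outgoing edge label) pairs in order,
   starting at some vertex: closed directed path without repeated vertex *)
Definition is_circuit (C : seq (V * S)) : Prop :=
  [/\ C != [::],
      {in map fst C, forall v, is_vertex v},
      uniq (map fst C) &
      cycle (fun u v : V * S => rgdelta u.1 u.2 == v.1) C].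

(* two rooted representations denote the same circuit iff one is a rotation
   of the other *)
Definition same_circuit (C D : seq (V * S)) : Prop := exists i, rot i C = D.

Definition passes_through (C : seq (V * S)) (N : V) : bool := N \in map fst C.

Definition circ_adj (C D : seq (V * S)) : bool :=
  has (fun v => v \in map fst D) (map fst C).

End Graph.

From HB Require Import structures.
From mathcomp Require Import all_boot all_order all_algebra.
From mathcomp Require Import zify.
Set Implicit Arguments. Unset Strict Implicit. Unset Printing Implicit Defensive.

(* For every configuration x, the word tau_n(x) leads from the root of the
   reversibility graph to a vertex meeting the acceptance set: the windows of
   x itself (padded by zeros, resp. read cyclically) lie in every vertex along
   the way.  On the other hand the value of N yields a word of length k
   ending at N, and the circuit-graph paths let us splice the circuits C_j,
   each traversed x_j times, one after another into a closed walk at N: every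
   new circuit passes through N or shares a vertex with a circuit already on
   the walk.  The resulting word of length k + sum_j x_j r_j ends at the
   negative vertex N, so it is not in the image of tau_n. *)

Lemma last_scanl (T U : Type) (g : T -> U -> T) x s :
  last x (scanl g x s) = foldl g x s.
Proof. by elim: s x => //= y s IH x; rewrite IH. Qed.

Lemma belast_iota m i : belast i (iota i.+1 m) = iota i m.
Proof. by elim: m i => [|m IH] i //=; rewrite IH. Qed.

Lemma val_mktuple_iota (T : Type) n (F : nat -> T) :
  val [tuple F (nat_of_ord i) | i < n] = map F (iota 0 n).
Proof. by rewrite /= -val_enum_ord -map_comp; apply: eq_map. Qed.

Lemma val_shift_tuple (T : Type) n (z : nat -> T) i :
  val [tuple z (i + p) | p < n] = map z (iota i n).
Proof.
by rewrite (val_mktuple_iota _ (fun p => z (i + p))) -[in RHS](addn0 i) iotaDl -map_comp.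
Qed.

Section Walks.
Variables (S : finType) (G : RGdata S).
Local Notation V := {set rgX G}.
Local Notation delta := (@rgdelta S G).

Definition labelled_edge (a b : V * S) := delta a.1 a.2 == b.1.

Lemma path_scanl (a : V * S) s :
  path labelled_edge a s -> scanl delta a.1 (map snd (belast a s)) = map fst s.
Proof. by elim: s a => //= b s IH a /andP [/eqP -> /IH ->]. Qed.

Lemma cycle_round_walk C v : cycle labelled_edge C -> v \in map fst C ->
  exists c, [/\ size c = size C, foldl delta v c = v &
                {subset map fst C <= scanl delta v c}].
Proof.
move=> cycC /mapP [p pC ->]; have [i s Cs] := rot_to pC.
have := cycC; rewrite -(rot_cycle i) Cs /= => /path_scanl.
rewrite belast_rcons map_rcons => round.
exists (map snd (p :: s)); split.
- by rewrite size_map -Cs size_rot.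
- by rewrite -last_scanl round last_rcons.
- by move=> w; rewrite -(mem_rot i) -map_rot Cs round mem_rcons.
Qed.

Lemma closed_walk_iter v c n : foldl delta v c = v ->
  [/\ size (flatten (nseq n c)) = n * size c,
      foldl delta v (flatten (nseq n c)) = v &
      0 < n -> {subset scanl delta v c <= scanl delta v (flatten (nseq n c))}].
Proof.
move=> closed_c; split; first by elim: n => //= n IH; rewrite size_cat IH mulSn.
  by elim: n => //= n IH; rewrite foldl_cat closed_c.
by case: n => //= n _ w; rewrite scanl_cat mem_cat => ->.
Qed.

Lemma scanl_split v u w : w \in v :: scanl delta v u ->
  exists u1 u2, u = u1 ++ u2 /\ foldl delta v u1 = w.
Proof.
elim: u v => [|a u IH] v /=; first by rewrite inE => /eqP ->; exists [::], [::].
rewrite inE => /orP [/eqP ->|/IH [u1 [u2 [-> <-]]]]; first by exists [::], (a :: u).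
by exists (a :: u1), u2.
Qed.

Lemma splice_closed_walk v u w c :
  w \in v :: scanl delta v u -> foldl delta w c = w ->
  exists u', [/\ foldl delta v u' = foldl delta v u, size u' = size u + size c,
     {subset v :: scanl delta v u <= v :: scanl delta v u'} &
     {subset scanl delta w c <= v :: scanl delta v u'}].
Proof.
move=> /scanl_split [u1 [u2 [-> visit_w]]] closed_c.
exists (u1 ++ c ++ u2); rewrite !foldl_cat !scanl_cat visit_w closed_c.
split=> //; first by rewrite !size_cat; lia.
  by move=> z; rewrite !(inE, mem_cat); case/orP=> [->|/orP [] ->]; rewrite ?orbT.
by move=> z; rewrite !(inE, mem_cat) => ->; rewrite ?orbT.
Qed.

Section CircuitSplicing.
Variables (N : V) (t : nat) (C : 'I_t -> seq (V * S)) (x : 'I_t -> nat).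
Hypothesis C_cycle : forall j, cycle labelled_edge (C j).
Hypothesis C_connected : forall j, 0 < x j ->
  exists p : seq 'I_t,
    [/\ path (fun i i' => circ_adj (C i) (C i')) j p,
        all (fun i => 0 < x i) (j :: p) &
        passes_through (C (last j p)) N].

Local Notation used := [set j : 'I_t | 0 < x j].

Definition covering_walk (A : {set 'I_t}) (u : seq S) : Prop :=
  [/\ foldl delta N u = N, size u = \sum_(j in A) x j * size (C j) &
      forall j, j \in A -> {subset map fst (C j) <= N :: scanl delta N u}].

Lemma frontier_circuit (A : {set 'I_t}) : A \proper used ->
  exists2 j, j \in used :\: A &
    passes_through (C j) N \/ exists2 i, i \in A & circ_adj (C j) (C i).
Proof.
case/properP=> _ [j0]; rewrite inE => x_j0 j0A.
have [p [] ] := C_connected x_j0.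
elim: p j0 x_j0 j0A => [|i p IH] j0 x_j0 j0A /=.
  by move=> _ _ through_N; exists j0; [rewrite !inE j0A | left].
case/andP=> adj_j0i path_p /and3P [_ x_i all_p] through_N.
have [iA|iA] := boolP (i \in A); first by exists j0; [rewrite !inE j0A | right; exists i].
by apply: (IH i) => //=; rewrite x_i.
Qed.

Lemma covering_walk_grow (A : {set 'I_t}) u : A \proper used -> covering_walk A u ->
  exists j u', j \in used :\: A /\ covering_walk (j |: A) u'.
Proof.
move=> ltA [closed_u size_u cover_u].
have [j] := frontier_circuit ltA; rewrite !inE => /andP [jA x_j] touch_j.
have [v vCj visit_v] : exists2 v, v \in map fst (C j) & v \in N :: scanl delta N u.
  case: touch_j => [through_N|[i iA /hasP [v vCj vCi]]].
    by exists N; [exact: through_N | exact: mem_head].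
  by exists v => //; apply: cover_u vCi.
have [c [size_c closed_c round_c]] := cycle_round_walk (C_cycle j) vCj.
have [size_cn closed_cn visit_cn] := closed_walk_iter (x j) closed_c.
have [u' [closed_u' size_u' keep_u' new_u']] := splice_closed_walk visit_v closed_cn.
exists j, u'; split; first by rewrite !inE jA.
split; first by rewrite closed_u' closed_u.
  by rewrite size_u' size_cn size_c big_setU1 //= size_u addnC.
move=> i; rewrite in_setU1 => /orP [/eqP ->|iA] w wCi.
  exact/new_u'/(visit_cn x_j)/round_c.
exact: keep_u' (cover_u _ iA _ wCi).
Qed.

Lemma covering_walk_used : exists u, covering_walk used u.
Proof.
suff grow n (A : {set 'I_t}) u : #|used| - #|A| <= n -> A \subset used -> covering_walk A u ->
    exists u, covering_walk used u.
  apply: (grow _ set0 [::]) => //; first exact: sub0set.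
  by split=> //; rewrite ?big_set0 // => j; rewrite inE.
elim: n A u => [|n IH] A u small subA cover_A;
  (case/eqVproper: subA => [eqA|ltA]; first by exists u; rewrite -eqA).
  by rewrite leqn0 subn_eq0 leqNgt (proper_card ltA) in small.
have [j [u' [/setDP [j_used jA] cover']]] := covering_walk_grow ltA cover_A.
apply: (IH (j |: A) u' _ _ cover').
  by rewrite cardsU1 jA add1n subnS -subn1 leq_subLR add1n.
apply/subsetP => i; rewrite in_setU1 => /orP [/eqP -> //|].
exact: (subsetP (proper_sub ltA)).
Qed.

Lemma closed_walk_of_circuits :
  exists u, foldl delta N u = N /\ size u = \sum_(j < t) x j * size (C j).
Proof.
have [u [closed_u size_u _]] := covering_walk_used.
exists u; split=> //; rewrite size_u big_rmcond // => j.
by rewrite inE -eqn0Ngt => /eqP ->.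
Qed.
End CircuitSplicing.
End Walks.

Section Images.
Variables (s1 l r : nat) (f : (l + r).+1.-tuple 'I_s1.+1 -> 'I_s1.+1).
Local Notation S := 'I_s1.+1.

Definition window (z : nat -> S) i : (l + r).-tuple S := [tuple z (i + p) | p < l + r].

Definition nbhd_window (z : nat -> S) i : (l + r).+1.-tuple S :=
  [tuple z (i + p) | p < (l + r).+1].

Definition window_word (z : nat -> S) n := map (fun i => f (nbhd_window z i)) (iota 0 n).

Lemma cons_window z i : cons_tuple (z i) (window z i.+1) = nbhd_window z i.
Proof.
apply: val_inj; change (z i :: val (window z i.+1) = val (nbhd_window z i)).
by rewrite !val_shift_tuple.
Qed.

Lemma belast_window z i : val (window z i) = belast (z i) (val (window z i.+1)).
Proof. by rewrite !val_shift_tuple belast_map belast_iota. Qed.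

Lemma window_wordS z n : window_word z n.+1 = rcons (window_word z n) (f (nbhd_window z n)).
Proof. by rewrite /window_word -[n.+1]addn1 iotaD map_cat cats1. Qed.

Lemma run_null_window z n : window z 0 \in rgroot (RG_null f) ->
  window z n \in run (RG_null f) (window_word z n).
Proof.
move=> root_z; elim: n => // n IH.
rewrite /run window_wordS foldl_rcons inE; apply/existsP; exists (z n).
rewrite cons_window eqxx andbT; apply/existsP; exists (window z n).
by apply/andP; split; [exact: IH | apply/eqP; exact: belast_window].
Qed.

Lemma run_per_window z n :
  (window z 0, window z n) \in run (RG_per f) (window_word z n).
Proof.
elim: n => [|n IH]; first by rewrite inE.
rewrite /run window_wordS foldl_rcons inE; apply/existsP; exists (z n).
rewrite cons_window eqxx andbT; apply/existsP; exists (window z 0, window z n).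
by rewrite /= eqxx /=; apply/andP; split; [exact: IH | apply/eqP; exact: belast_window].
Qed.

Lemma val_global_map b n (x : n.-tuple S) :
  val (global_map f b x) = map (fun i => f (nbhd l r b x i)) (iota 0 n).
Proof. exact: (val_mktuple_iota _ (fun i => f (nbhd l r b x i))). Qed.

Lemma run_global_map_accepts b n (x : n.-tuple S) :
  run (RG f b) (val (global_map f b x)) :&: rgacc (RG f b) != set0.
Proof.
rewrite val_global_map; case: b => /=.
- pose z j := nth ord0 (nseq l ord0 ++ val x ++ nseq r ord0) j.
  apply/set0Pn; exists (window z n); rewrite inE; apply/andP; split.
    change (window z n \in run (RG_null f) (window_word z n)).
    apply: run_null_window; rewrite inE; apply/forallP => i.
    by apply/implyP => lt_il; rewrite tnth_mktuple /z nth_cat size_nseq lt_il nth_nseq lt_il.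
  rewrite inE; apply/forallP => i; apply/implyP => le_li.
  have le_ln : l <= n + i by lia.
  have le_n : n <= n + i - l by lia.
  rewrite tnth_mktuple /z nth_cat size_nseq ltnNge le_ln /= nth_cat size_tuple.
  by rewrite ltnNge le_n /= nth_nseq if_same.
- pose z j := nth ord0 x (absz ((j%:Z - l%:Z) %% n%:Z)%Z).
  apply/set0Pn; exists (window z 0, window z n); rewrite inE; apply/andP; split.
    exact: (run_per_window z n).
  rewrite inE /=; apply/eqP; apply: eq_mktuple => p.
  by rewrite /z add0n PoszD -GRing.addrA modzDl.
Qed.
End Images.

Theorem theorem4 (s1 l r : nat) (f : (l + r).+1.-tuple 'I_s1.+1 -> 'I_s1.+1)
  (b : boundary) (hm : 0 < l + r)
  (N : {set rgX (RG f b)}) (k : nat)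
  (t : nat) (C : 'I_t -> seq ({set rgX (RG f b)} * 'I_s1.+1)) (x : 'I_t -> nat) :
  is_vertex N -> negative N -> has_value N k -> 1 <= k ->
  (forall j, is_circuit (C j)) ->
  (forall j j', j != j' -> ~ same_circuit (C j) (C j')) ->
  (forall j, 0 < x j ->
     exists p : seq 'I_t,
       [/\ path (fun i i' => circ_adj (C i) (C i')) j p,
           all (fun i => 0 < x i) (j :: p) &
           passes_through (C (last j p)) N]) ->
  ~ reversible f b (k + \sum_(j < t) x j * size (C j)).
Proof.
move=> _ N_neg [[w [size_w run_w]] _] _ C_circuit _ C_connected [g _ gK].
have C_cycle j : cycle (labelled_edge (G := RG f b)) (C j) by case: (C_circuit j).
have [u [closed_u size_u]] := closed_walk_of_circuits C_cycle C_connected.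
have size_wu : size (w ++ u) == k + \sum_(j < t) x j * size (C j).
  by rewrite size_cat size_w size_u.
have := run_global_map_accepts f b (g (Tuple size_wu)).
by rewrite gK /run foldl_cat -/(run _ w) run_w closed_u N_neg eqxx.
Qed.
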